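(* Let $a,b>0$ with $a+b\leq 1$, and let $c\in\mathbb{R}$. Define $$f_{a,b,c}(x)=\frac{{}_2F_1(a,b;a+b;x)}{c-\log(1-x)}.$$ Define on $[0,1)$ the functions $$h(x)=\frac{(ab)^2}{(a+b)(a+b+1)}(1-x)\,{}_2F_1(a+1,b+1;a+b+2;x)+\frac{ab}{a+b}\,{}_2F_1(a,b;a+b+1;x),$$ $$g(x)=-\Big(\frac{2ab}{a+b}\,{}_2F_1(a,b;a+b+1;x)+{}_2F_1(a,b;a+b;x)\Big),\qquad \Delta(x)=g(x)^2-8h(x)\,{}_2F_1(a,b;a+b;x),$$ $$\omega_\pm(x)=\frac{-g(x)\pm\sqrt{\Delta(x)}}{2h(x)},\qquad \varphi_\pm(x)=\log(1-x)+\omega_\pm(x),$$ and set $\alpha_0=\max_{x\in[0,1)}\varphi_+(x)$, $\delta_-=\max_{x\in[0,1)}\varphi_-(x)$, $\delta_+=\min_{x\in[0,1)}\varphi_+(x)$. Then $f_{a,b,c}$ is convex on $[0,1)$ if and only if $c\geq\alpha_0$, and $f_{a,b,c}$ is concave on $[0,1)$ if and only if $c\in[\delta_-,\delta_+]$.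
   Context: ${}_2F_1(a,b;c;x)=\sum_{n\geq0}\frac{(a)_n(b)_n}{(c)_n}\frac{x^n}{n!}$ is the Gauss hypergeometric function, with $(a)_n=\Gamma(a+n)/\Gamma(a)$. *)

From Stdlib Require Import Reals.
From Coquelicot Require Import Coquelicot.
Open Scope R_scope.

Fixpoint poch (a : R) (n : nat) : R :=
  match n with
  | O => 1
  | S k => poch a k * (a + INR k)
  end.

Definition hyp2F1_term (a b c x : R) (n : nat) : R :=
  poch a n * poch b n / poch c n * x ^ n / INR (Factorial.fact n).

Definition hyp2F1 (a b c x : R) : R := Series (hyp2F1_term a b c x).

Definition f_abc (a b c x : R) : R :=
  hyp2F1 a b (a + b) x / (c - ln (1 - x)).

Definition h_ab (a b x : R) : R :=
  (a * b) ^ 2 / ((a + b) * (a + b + 1)) * (1 - x) * hyp2F1 (a + 1) (b + 1) (a + b + 2) x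
  + a * b / (a + b) * hyp2F1 a b (a + b + 1) x.

Definition g_ab (a b x : R) : R :=
  - (2 * a * b / (a + b) * hyp2F1 a b (a + b + 1) x + hyp2F1 a b (a + b) x).

Definition Delta_ab (a b x : R) : R :=
  g_ab a b x ^ 2 - 8 * h_ab a b x * hyp2F1 a b (a + b) x.

Definition omega_plus (a b x : R) : R :=
  (- g_ab a b x + sqrt (Delta_ab a b x)) / (2 * h_ab a b x).
Definition omega_minus (a b x : R) : R :=
  (- g_ab a b x - sqrt (Delta_ab a b x)) / (2 * h_ab a b x).

Definition phi_plus (a b x : R) : R := ln (1 - x) + omega_plus a b x.
Definition phi_minus (a b x : R) : R := ln (1 - x) + omega_minus a b x.

(* sup / inf over [0,1) (equal to the max / min whenever attained) *)
Definition sup01 (F : R -> R) : Rbar := Lub_Rbar (fun y => exists x, 0 <= x < 1 /\ y = F x).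
Definition inf01 (F : R -> R) : Rbar := Glb_Rbar (fun y => exists x, 0 <= x < 1 /\ y = F x).

Definition alpha0 (a b : R) : Rbar := sup01 (phi_plus a b).
Definition delta_minus (a b : R) : Rbar := sup01 (phi_minus a b).
Definition delta_plus (a b : R) : Rbar := inf01 (phi_plus a b).

Definition defined01 (c : R) : Prop :=
  forall x, 0 <= x < 1 -> c - ln (1 - x) <> 0.

Definition convex01 (f : R -> R) : Prop :=
  forall x y t, 0 <= x < 1 -> 0 <= y < 1 -> 0 <= t <= 1 ->
    f (t * x + (1 - t) * y) <= t * f x + (1 - t) * f y.

Definition concave01 (f : R -> R) : Prop :=
  forall x y t, 0 <= x < 1 -> 0 <= y < 1 -> 0 <= t <= 1 ->
    t * f x + (1 - t) * f y <= f (t * x + (1 - t) * y).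

(* With u = c - ln (1 - x), the contiguous relations of 2F1 give
   f'' = Q(u) / (u^3 (1 - x)^2), where Q(u) = h u^2 + g u + 2 2F1(a,b;a+b;x) is a quadratic
   in u with h > 0, discriminant Delta and roots omega_- <= omega_+. Definedness on [0,1)
   forces c > 0, hence u > 0, so concavity means omega_- <= u <= omega_+, i.e.
   phi_- <= c <= phi_+, at every x. Convexity means u <= omega_- or u >= omega_+ at every x;
   since omega_- <= 4 while u -> +oo at 1, and the two alternatives can only be exchanged
   where Delta vanishes, which happens at most at x = 0, the second one holds everywhere,
   i.e. phi_+ <= c. The core is Delta > 0 on (0,1) when a + b <= 1: the function
   T = x Delta / 2F1(a,b;a+b;x)^2 vanishes at 0 and satisfies x T' + (a + b) T > 0. *)

From Stdlib Require Import Reals Lra Lia.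
From Coquelicot Require Import Coquelicot.
Open Scope R_scope.

Lemma Rabs_lt_1_of_01 x : 0 <= x < 1 -> Rabs x < 1.
Proof. intro Hx; rewrite Rabs_pos_eq; lra. Qed.

Lemma continuity_pt_of_ex_derive (f : R -> R) x : ex_derive f x -> continuity_pt f x.
Proof. intro Hf; apply derivable_continuous_pt, ex_derive_Reals_0, Hf. Qed.

(** * The Gauss hypergeometric series *)

Definition hyp2F1_coef (a b c : R) (n : nat) : R :=
  poch a n * poch b n / poch c n / INR (Factorial.fact n).

Lemma hyp2F1_PSeries a b c x : hyp2F1 a b c x = PSeries (hyp2F1_coef a b c) x.
Proof.
  apply Series_ext; intro n.
  unfold hyp2F1_term, hyp2F1_coef, Rdiv; ring.
Qed.

Lemma hyp2F1_coef_0 a b c : hyp2F1_coef a b c 0 = 1.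
Proof. unfold hyp2F1_coef; simpl; field. Qed.

Lemma hyp2F1_0 a b c : hyp2F1 a b c 0 = 1.
Proof. rewrite hyp2F1_PSeries, PSeries_0; apply hyp2F1_coef_0. Qed.

Lemma poch_pos a n : 0 < a -> 0 < poch a n.
Proof.
  intro Ha; induction n as [|n IH]; simpl; [lra|].
  pose proof (pos_INR n); apply Rmult_lt_0_compat; lra.
Qed.

Lemma poch_S_shift a n : poch a (S n) = a * poch (a + 1) n.
Proof.
  induction n as [|n IH]; [simpl; ring|].
  change (poch a (S (S n))) with (poch a (S n) * (a + INR (S n))).
  rewrite IH; cbn [poch]; rewrite S_INR; ring.
Qed.

Lemma poch_le_shift a n : 0 < a -> poch a n <= poch (a + 1) n.
Proof.
  intro Ha; induction n as [|n IH]; simpl; [lra|].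
  pose proof (poch_pos a n Ha); pose proof (pos_INR n).
  apply Rmult_le_compat; lra.
Qed.

Lemma INR_fact_S n : INR (Factorial.fact (S n)) = INR (S n) * INR (Factorial.fact n).
Proof. change (Factorial.fact (S n)) with (S n * Factorial.fact n)%nat; apply mult_INR. Qed.

Lemma is_lim_seq_affine_ratio a c :
  0 < c -> is_lim_seq (fun n => (a + INR n) / (c + INR n)) 1.
Proof.
  intro Hc.
  assert (Hinv : is_lim_seq (fun n => / (c + INR n)) 0).
  { replace (Finite 0) with (Rbar_inv p_infty) by reflexivity.
    apply is_lim_seq_inv; [|discriminate].
    eapply is_lim_seq_plus; [apply is_lim_seq_const|apply is_lim_seq_INR|constructor]. }
  apply is_lim_seq_ext with (fun n => 1 + (a - c) * / (c + INR n)).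
  { intro n; pose proof (pos_INR n); field; lra. }
  replace (Finite 1) with (Finite (1 + (a - c) * 0)) by (f_equal; ring).
  apply is_lim_seq_plus'; [apply is_lim_seq_const|].
  apply is_lim_seq_mult'; [apply is_lim_seq_const|exact Hinv].
Qed.

Section HypergeometricSeries.

Variables a b c : R.
Hypotheses (Ha : 0 < a) (Hb : 0 < b) (Hc : 0 < c).

Lemma hyp2F1_coef_pos n : 0 < hyp2F1_coef a b c n.
Proof.
  pose proof (poch_pos a n Ha); pose proof (poch_pos b n Hb).
  pose proof (poch_pos c n Hc); pose proof (INR_fact_lt_0 n).
  unfold hyp2F1_coef; repeat apply Rdiv_lt_0_compat; try apply Rmult_lt_0_compat; lra.
Qed.

Lemma hyp2F1_coef_S n :
  hyp2F1_coef a b c (S n) =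
  hyp2F1_coef a b c n * ((a + INR n) * (b + INR n) / ((c + INR n) * INR (S n))).
Proof.
  unfold hyp2F1_coef; simpl poch; rewrite INR_fact_S.
  pose proof (poch_pos c n Hc); pose proof (INR_fact_lt_0 n); pose proof (pos_INR n).
  rewrite S_INR; field; repeat split; lra.
Qed.

Lemma CV_radius_hyp2F1_coef : CV_radius (hyp2F1_coef a b c) = 1.
Proof.
  replace (Finite 1) with (Finite (/ 1)) by (f_equal; field).
  apply CV_radius_finite_DAlembert; [|lra|].
  - intro n; pose proof (hyp2F1_coef_pos n); lra.
  - apply is_lim_seq_ext with
      (fun n => (a + INR n) / (1 + INR n) * ((b + INR n) / (c + INR n))).
    + intro n; rewrite hyp2F1_coef_S.
      pose proof (hyp2F1_coef_pos n); pose proof (pos_INR n); rewrite S_INR.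
      rewrite Rabs_pos_eq.
      * field; repeat split; lra.
      * apply Rdiv_le_0_compat; [|lra].
        apply Rmult_le_pos; [lra|].
        apply Rdiv_le_0_compat; [nra|]; apply Rmult_lt_0_compat; lra.
    + replace (Finite 1) with (Finite (1 * 1)) by (f_equal; ring).
      apply is_lim_seq_mult'; apply is_lim_seq_affine_ratio; lra.
Qed.

Lemma ex_pseries_hyp2F1_coef x : Rabs x < 1 -> ex_pseries (hyp2F1_coef a b c) x.
Proof. intro Hx; apply CV_radius_inside; rewrite CV_radius_hyp2F1_coef; exact Hx. Qed.

Lemma PS_derive_hyp2F1_coef n :
  PS_derive (hyp2F1_coef a b c) n = a * b / c * hyp2F1_coef (a + 1) (b + 1) (c + 1) n.
Proof.
  unfold PS_derive, hyp2F1_coef; rewrite !poch_S_shift, INR_fact_S.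
  pose proof (poch_pos (c + 1) n ltac:(lra)); pose proof (INR_fact_lt_0 n).
  pose proof (lt_0_INR (S n) ltac:(lia)).
  field; repeat split; lra.
Qed.

Lemma is_derive_hyp2F1 x : Rabs x < 1 ->
  is_derive (hyp2F1 a b c) x (a * b / c * hyp2F1 (a + 1) (b + 1) (c + 1) x).
Proof.
  intro Hx.
  apply is_derive_ext with (PSeries (hyp2F1_coef a b c));
    [intro; symmetry; apply hyp2F1_PSeries|].
  rewrite hyp2F1_PSeries, <- PSeries_scal.
  rewrite (PSeries_ext _ (PS_derive (hyp2F1_coef a b c)))
    by (intro n; symmetry; apply PS_derive_hyp2F1_coef).
  apply is_derive_PSeries; rewrite CV_radius_hyp2F1_coef; exact Hx.
Qed.

Lemma Derive_hyp2F1 x : Rabs x < 1 ->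
  Derive (fun y => hyp2F1 a b c y) x = a * b / c * hyp2F1 (a + 1) (b + 1) (c + 1) x.
Proof. intro Hx; apply is_derive_unique, is_derive_hyp2F1, Hx. Qed.

Lemma hyp2F1_ge_1 x : 0 <= x < 1 -> 1 <= hyp2F1 a b c x.
Proof.
  intro Hx; rewrite hyp2F1_PSeries; unfold PSeries.
  assert (He : ex_series (fun k => hyp2F1_coef a b c k * x ^ k)).
  { apply ex_pseries_R, ex_pseries_hyp2F1_coef, Rabs_lt_1_of_01, Hx. }
  rewrite Series_incr_1, hyp2F1_coef_0, pow_O by exact He.
  cut (0 <= Series (fun k => hyp2F1_coef a b c (S k) * x ^ S k)); [lra|].
  assert (Hzero : Series (fun _ : nat => 0) = 0).
  { rewrite (Series_ext _ (fun _ => 0 * 0)) by (intro; ring).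
    rewrite Series_scal_l; ring. }
  rewrite <- Hzero; apply Series_le; [|exact (proj1 (ex_series_incr_1 _) He)].
  intro n; split; [lra|].
  apply Rmult_le_pos; [apply Rlt_le, hyp2F1_coef_pos|apply pow_le; lra].
Qed.

Lemma hyp2F1_succ_le x : 0 <= x < 1 -> hyp2F1 a b (c + 1) x <= hyp2F1 a b c x.
Proof.
  intro Hx; rewrite !hyp2F1_PSeries; unfold PSeries.
  apply Series_le.
  - intro n; pose proof (pow_le x n ltac:(lra)).
    pose proof (hyp2F1_coef_pos n).
    pose proof (poch_pos a n Ha); pose proof (poch_pos b n Hb).
    pose proof (poch_pos c n Hc); pose proof (poch_le_shift c n Hc).
    pose proof (INR_fact_lt_0 n).
    split.
    + apply Rmult_le_pos; [|lra]; unfold hyp2F1_coef.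
      repeat apply Rdiv_le_0_compat; nra.
    + apply Rmult_le_compat_r; [lra|]; unfold hyp2F1_coef, Rdiv.
      apply Rmult_le_compat_r; [apply Rlt_le, Rinv_0_lt_compat; lra|].
      apply Rmult_le_compat_l; [nra|].
      apply Rinv_le_contravar; lra.
  - apply ex_pseries_R, ex_pseries_hyp2F1_coef, Rabs_lt_1_of_01, Hx.
Qed.

End HypergeometricSeries.

Lemma ex_derive_hyp2F1_01 a b c x : 0 < a -> 0 < b -> 0 < c -> 0 <= x < 1 ->
  ex_derive (fun y => hyp2F1 a b c y) x.
Proof.
  intros Ha Hb Hc Hx; eexists; apply is_derive_hyp2F1; auto; now apply Rabs_lt_1_of_01.
Qed.

(* The left side is [x] times the derivative of [2F1(a,b;c+1;x)]. *)
Lemma hyp2F1_contiguous a b c x : 0 < a -> 0 < b -> 0 < c -> Rabs x < 1 ->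
  x * (a * b / (c + 1) * hyp2F1 (a + 1) (b + 1) (c + 2) x)
  = c * (hyp2F1 a b c x - hyp2F1 a b (c + 1) x).
Proof.
  intros Ha Hb Hc Hx.
  replace (c + 2) with (c + 1 + 1) by ring.
  rewrite !hyp2F1_PSeries, <- PSeries_scal.
  rewrite (PSeries_ext _ (PS_derive (hyp2F1_coef a b (c + 1))))
    by (intro n; rewrite PS_derive_hyp2F1_coef by lra; reflexivity).
  rewrite <- PSeries_incr_1, <- PSeries_minus, <- PSeries_scal
    by (apply ex_pseries_hyp2F1_coef; auto; lra).
  apply PSeries_ext; intros [|k];
    unfold PS_scal, PS_minus, PS_incr_1, PS_derive, plus, opp, scal, zero;
    rewrite ?S_INR; simpl; unfold mult; simpl; change (@eq R ?x ?y) with (x = y).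
  - rewrite !hyp2F1_coef_0; ring.
  - unfold hyp2F1_coef; rewrite (poch_S_shift c k), INR_fact_S; cbn [poch].
    pose proof (poch_pos (c + 1) k ltac:(lra)); pose proof (INR_fact_lt_0 k).
    pose proof (pos_INR k); rewrite !S_INR.
    field; repeat split; lra.
Qed.

(* Euler's transformation [2F1(a,b;c;x) = (1-x)^(c-a-b) 2F1(c-a,c-b;c;x)] at [c = a+b+1]. *)
Lemma hyp2F1_euler_transform a b x : 0 < a -> 0 < b -> Rabs x < 1 ->
  (1 - x) * hyp2F1 (a + 1) (b + 1) (a + b + 1) x = hyp2F1 a b (a + b + 1) x.
Proof.
  intros Ha Hb Hx.
  rewrite !hyp2F1_PSeries.
  set (C := hyp2F1_coef (a + 1) (b + 1) (a + b + 1)).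
  assert (HC : ex_pseries C x) by (apply ex_pseries_hyp2F1_coef; auto; lra).
  replace ((1 - x) * PSeries C x) with (PSeries C x - x * PSeries C x) by ring.
  rewrite <- PSeries_incr_1, <- PSeries_minus by (auto; now apply ex_pseries_incr_1).
  apply PSeries_ext; intros [|k];
    unfold PS_minus, PS_incr_1, plus, opp; simpl; change (@eq R ?x ?y) with (x = y).
  - unfold C; rewrite !hyp2F1_coef_0; unfold zero; simpl; ring.
  - unfold C; rewrite hyp2F1_coef_S by lra; unfold hyp2F1_coef.
    rewrite (poch_S_shift a k), (poch_S_shift b k), INR_fact_S; cbn [poch].
    pose proof (poch_pos (a + b + 1) k ltac:(lra)); pose proof (INR_fact_lt_0 k).
    pose proof (pos_INR k); rewrite S_INR.
    field; repeat split; lra.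
Qed.

(** * Calculus on [0,1) *)

Lemma MVT_01 (F F' : R -> R) x y :
  (forall z, 0 <= z < 1 -> is_derive F z (F' z)) -> 0 <= x -> x < y -> y < 1 ->
  exists c, x < c < y /\ F y - F x = F' c * (y - x).
Proof.
  intros HF Hx Hxy Hy.
  destruct (MVT_cor2 F F' x y Hxy) as [c [E Hc]].
  - intros c Hc; apply is_derive_Reals, HF; lra.
  - exists c; split; assumption.
Qed.

Lemma MVT_le_01 (F F' : R -> R) x y :
  (forall z, 0 <= z < 1 -> is_derive F z (F' z)) -> 0 <= x <= y -> y < 1 ->
  exists c, x <= c <= y /\ F y - F x = F' c * (y - x).
Proof.
  intros HF Hxy Hy; destruct (Req_dec x y) as [<-|Hne].
  - exists x; split; [lra|ring].
  - destruct (MVT_01 F F' x y HF) as [c [Hc E]]; try lra.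
    exists c; split; [lra|exact E].
Qed.

Lemma continuity_pt_neg_right (k : R -> R) x0 ub :
  continuity_pt k x0 -> k x0 < 0 -> x0 < ub ->
  exists y, x0 < y < ub /\ forall z, x0 <= z <= y -> k z < 0.
Proof.
  intros Hk Hneg Hub.
  destruct (Hk (- k x0 / 2) ltac:(lra)) as [d [Hd Hclose]].
  exists (x0 + Rmin (d / 2) ((ub - x0) / 2)).
  pose proof (Rmin_l (d / 2) ((ub - x0) / 2)); pose proof (Rmin_r (d / 2) ((ub - x0) / 2)).
  pose proof (Rmin_pos (d / 2) ((ub - x0) / 2) ltac:(lra) ltac:(lra)).
  split; [lra|intros z Hz].
  destruct (Req_dec z x0) as [->|Hne]; [exact Hneg|].
  assert (Hkz : Rabs (k z - k x0) < - k x0 / 2).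
  { apply Hclose; split; [split; [exact I|congruence]|].
    simpl; unfold R_dist; rewrite Rabs_pos_eq; lra. }
  apply Rabs_lt_between in Hkz; lra.
Qed.

Section ConvexityOn01.

Variables f f' f'' : R -> R.
Hypotheses (Hf : forall x, 0 <= x < 1 -> is_derive f x (f' x))
           (Hf' : forall x, 0 <= x < 1 -> is_derive f' x (f'' x)).

Lemma convex01_of_deriv2_nonneg : (forall x, 0 <= x < 1 -> 0 <= f'' x) -> convex01 f.
Proof.
  intro Hf''.
  assert (Hmono : forall x y, 0 <= x <= y -> y < 1 -> f' x <= f' y).
  { intros x y Hxy Hy; destruct (MVT_le_01 f' f'' x y Hf' Hxy Hy) as [c [Hc E]].
    specialize (Hf'' c ltac:(lra)); nra. }
  assert (Hsorted : forall x y t, 0 <= x <= y -> y < 1 -> 0 <= t <= 1 ->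
            f (t * x + (1 - t) * y) <= t * f x + (1 - t) * f y).
  { intros x y t Hxy Hy Ht; set (z := t * x + (1 - t) * y).
    assert (Hz : x <= z <= y) by (unfold z; split; nra).
    destruct (MVT_le_01 f f' x z Hf ltac:(lra) ltac:(lra)) as [c1 [Hc1 E1]].
    destruct (MVT_le_01 f f' z y Hf ltac:(lra) Hy) as [c2 [Hc2 E2]].
    pose proof (Hmono c1 c2 ltac:(lra) ltac:(lra)) as Hc12.
    replace (z - x) with ((1 - t) * (y - x)) in E1 by (unfold z; ring).
    replace (y - z) with (t * (y - x)) in E2 by (unfold z; ring).
    assert (0 <= t * (1 - t) * (y - x) * (f' c2 - f' c1))
      by (apply Rmult_le_pos; [apply Rmult_le_pos|]; nra).
    nra. }
  intros x y t Hx Hy Ht; destruct (Rle_or_lt x y) as [Hxy|Hyx].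
  - apply Hsorted; lra.
  - replace (t * x + (1 - t) * y) with ((1 - t) * y + (1 - (1 - t)) * x) by ring.
    pose proof (Hsorted y x (1 - t) ltac:(lra) ltac:(lra) ltac:(lra)); lra.
Qed.

Lemma deriv2_nonneg_of_convex01 :
  (forall x, 0 <= x < 1 -> continuity_pt f'' x) -> convex01 f ->
  forall x, 0 <= x < 1 -> 0 <= f'' x.
Proof.
  intros Hc Hconv x0 Hx0.
  destruct (Rle_or_lt 0 (f'' x0)) as [H|Hneg]; [exact H|exfalso].
  destruct (continuity_pt_neg_right f'' x0 1 (Hc x0 Hx0) Hneg ltac:(lra))
    as [y [Hy Hf''y]].
  set (z := (x0 + y) / 2).
  destruct (MVT_01 f f' x0 z Hf) as [c1 [Hc1 E1]]; try (unfold z; lra).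
  destruct (MVT_01 f f' z y Hf) as [c2 [Hc2 E2]]; try (unfold z; lra).
  destruct (MVT_01 f' f'' c1 c2 Hf') as [c3 [Hc3 E3]]; try lra.
  pose proof (Hf''y c3 ltac:(lra)).
  assert (Hdecr : f' c2 < f' c1) by nra.
  pose proof (Hconv x0 y (1 / 2) Hx0 ltac:(lra) ltac:(lra)) as Hmid.
  replace (1 / 2 * x0 + (1 - 1 / 2) * y) with z in Hmid by (unfold z; field).
  replace (z - x0) with ((y - x0) / 2) in E1 by (unfold z; field).
  replace (y - z) with ((y - x0) / 2) in E2 by (unfold z; field).
  nra.
Qed.

Lemma convex01_iff_deriv2_nonneg :
  (forall x, 0 <= x < 1 -> continuity_pt f'' x) ->
  convex01 f <-> forall x, 0 <= x < 1 -> 0 <= f'' x.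
Proof.
  intro Hc; split; [now apply deriv2_nonneg_of_convex01|].
  exact convex01_of_deriv2_nonneg.
Qed.

End ConvexityOn01.

Lemma concave01_iff_convex01_opp (f : R -> R) : concave01 f <-> convex01 (fun x => - f x).
Proof. split; intros H x y t Hx Hy Ht; specialize (H x y t Hx Hy Ht); lra. Qed.

Lemma concave01_iff_deriv2_nonpos (f f' f'' : R -> R) :
  (forall x, 0 <= x < 1 -> is_derive f x (f' x)) ->
  (forall x, 0 <= x < 1 -> is_derive f' x (f'' x)) ->
  (forall x, 0 <= x < 1 -> continuity_pt f'' x) ->
  concave01 f <-> forall x, 0 <= x < 1 -> f'' x <= 0.
Proof.
  intros Hf Hf' Hc.
  rewrite concave01_iff_convex01_opp,
    (convex01_iff_deriv2_nonneg _ (fun x => - f' x) (fun x => - f'' x)).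
  - split; intros H x Hx; specialize (H x Hx); lra.
  - intros x Hx; apply @is_derive_opp, Hf, Hx.
  - intros x Hx; apply @is_derive_opp, Hf', Hx.
  - intros x Hx; apply continuity_pt_opp, Hc, Hx.
Qed.

Lemma derive_nonpos_at_right_min (f : R -> R) l m x0 :
  is_derive f m l -> x0 < m -> (forall y, x0 <= y <= m -> f m <= f y) -> l <= 0.
Proof.
  intros Hd Hm Hmin; apply is_derive_Reals in Hd.
  destruct (Rle_or_lt l 0) as [Hl|Hl]; [exact Hl|exfalso].
  destruct (Hd (l / 2) ltac:(lra)) as [d Hdel]; pose proof (cond_pos d).
  set (h := - Rmin (d / 2) ((m - x0) / 2)).
  assert (Hh : h < 0 /\ - ((m - x0) / 2) <= h /\ - (d / 2) <= h).
  { pose proof (Rmin_l (d / 2) ((m - x0) / 2)); pose proof (Rmin_r (d / 2) ((m - x0) / 2)).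
    pose proof (Rmin_pos (d / 2) ((m - x0) / 2) ltac:(lra) ltac:(lra)); unfold h; lra. }
  specialize (Hdel h ltac:(lra) ltac:(rewrite Rabs_left; lra)).
  specialize (Hmin (m + h) ltac:(lra)).
  apply Rabs_lt_between in Hdel.
  assert (Hq : (f (m + h) - f m) / h * h = f (m + h) - f m) by (field; lra).
  nra.
Qed.

(* If x T' + s T > 0 then (x^s T)' > 0, so T, which vanishes at 0, is positive.
   We argue at a minimum of T instead, where T' <= 0. *)
Lemma pos_of_euler_op_pos (T : R -> R) s x :
  0 <= s -> 0 < x -> T 0 = 0 ->
  (forall y, 0 <= y <= x -> continuity_pt T y) ->
  (forall y, 0 < y <= x -> exists l, is_derive T y l /\ 0 < y * l + s * T y) ->
  0 < T x.
Proof.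
  intros Hs Hx HT0 HTc HT'.
  destruct (Rlt_or_le 0 (T x)) as [H|H]; [exact H|exfalso].
  destruct (continuity_ab_min T 0 x ltac:(lra) HTc) as [m [Hm Hmx]].
  assert (Hmin : exists m', 0 < m' <= x /\ T m' <= 0 /\
                   forall y, 0 <= y <= m' -> T m' <= T y).
  { destruct (Req_dec m 0) as [->|Hm0].
    - rewrite HT0 in Hm.
      assert (T x = 0) by (specialize (Hm x ltac:(lra)); lra).
      exists x; repeat split; try lra; intros y Hy; specialize (Hm y Hy); lra.
    - exists m; repeat split; try lra.
      + specialize (Hm x ltac:(lra)); lra.
      + intros y Hy; apply Hm; lra. }
  destruct Hmin as [m' [Hm' [HTm' Hmin]]].
  destruct (HT' m' Hm') as [l [Hl Hpos]].
  pose proof (derive_nonpos_at_right_min T l m' 0 Hl ltac:(lra) Hmin).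
  nra.
Qed.

Lemma IVT_le_decr (f : R -> R) x y c :
  x <= y -> (forall z, x <= z <= y -> continuity_pt f z) -> f y <= c <= f x ->
  exists z, x <= z <= y /\ f z = c.
Proof.
  intros Hxy Hf Hc.
  destruct (Req_dec (f x) c) as [Ex|Ex]; [exists x; split; [lra|exact Ex]|].
  destruct (Req_dec (f y) c) as [Ey|Ey]; [exists y; split; [lra|exact Ey]|].
  destruct (Ranalysis5.IVT_interv (fun z => c - f z) x y) as [z [Hz E]].
  - intros z Hz; apply continuity_pt_minus; [apply continuity_pt_const; intros ? ?; reflexivity|].
    apply Hf, Hz.
  - destruct (Req_dec x y) as [<-|]; lra.
  - lra.
  - lra.
  - exists z; split; [exact Hz|lra].
Qed.

(** * Real quadratics *)

Section Quadratic.

Variables h g k D : R.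
Hypotheses (Hh : 0 < h) (HD : D = g ^ 2 - 4 * h * k) (HD0 : 0 <= D).

Lemma quadratic_factor u :
  h * u ^ 2 + g * u + k
  = h * (u - (- g + sqrt D) / (2 * h)) * (u - (- g - sqrt D) / (2 * h)).
Proof.
  pose proof (sqrt_sqrt D HD0).
  field_simplify; [|lra].
  replace (sqrt D ^ 2) with D by (simpl; lra).
  subst D; field; lra.
Qed.

Lemma quadratic_roots_around_vertex :
  (- g - sqrt D) / (2 * h) <= - g / (2 * h) <= (- g + sqrt D) / (2 * h).
Proof.
  pose proof (sqrt_pos D); unfold Rdiv.
  assert (0 < / (2 * h)) by (apply Rinv_0_lt_compat; lra).
  split; apply Rmult_le_compat_r; lra.
Qed.

Lemma quadratic_at_vertex :
  h * (- g / (2 * h)) ^ 2 + g * (- g / (2 * h)) + k = - D / (4 * h).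
Proof using Hh HD. rewrite HD; field; lra. Qed.

Lemma quadratic_nonpos_iff u :
  h * u ^ 2 + g * u + k <= 0 <->
  (- g - sqrt D) / (2 * h) <= u <= (- g + sqrt D) / (2 * h).
Proof.
  rewrite quadratic_factor; pose proof quadratic_roots_around_vertex as Hr.
  set (rp := (- g + sqrt D) / (2 * h)) in *; set (rm := (- g - sqrt D) / (2 * h)) in *.
  split.
  - intro Hq; split; apply Rnot_lt_le; intro Hu.
    + assert (0 < h * ((rp - u) * (rm - u))) by (repeat apply Rmult_lt_0_compat; lra).
      nra.
    + assert (0 < h * ((u - rp) * (u - rm))) by (repeat apply Rmult_lt_0_compat; lra).
      nra.
  - intro Hu; assert (0 <= h * ((rp - u) * (u - rm))) by (repeat apply Rmult_le_pos; lra).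
    nra.
Qed.

Lemma quadratic_nonneg_iff u :
  0 <= h * u ^ 2 + g * u + k <->
  u <= (- g - sqrt D) / (2 * h) \/ (- g + sqrt D) / (2 * h) <= u.
Proof.
  rewrite quadratic_factor; pose proof quadratic_roots_around_vertex as Hr.
  set (rp := (- g + sqrt D) / (2 * h)) in *; set (rm := (- g - sqrt D) / (2 * h)) in *.
  split.
  - intro Hq; destruct (Rle_or_lt u rm) as [Hu|Hu]; [now left|right].
    apply Rnot_lt_le; intro Hu'.
    assert (0 < h * ((rp - u) * (u - rm))) by (repeat apply Rmult_lt_0_compat; lra).
    nra.
  - intros [Hu|Hu].
    + assert (0 <= h * ((rp - u) * (rm - u))) by (repeat apply Rmult_le_pos; lra).
      nra.
    + assert (0 <= h * ((u - rp) * (u - rm))) by (repeat apply Rmult_le_pos; lra).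
      nra.
Qed.

Lemma quadratic_root_minus_bounds :
  0 < k -> 0 < - g -> 0 < (- g - sqrt D) / (2 * h) <= 2 * k / (- g).
Proof.
  intros Hk Hg; pose proof (sqrt_pos D); pose proof (sqrt_sqrt D HD0).
  assert (Hlt : sqrt D < - g).
  { apply Rsqr_incrst_0; try lra; unfold Rsqr; nra. }
  assert (Hroot : (- g - sqrt D) / (2 * h) = 2 * k / (- g + sqrt D)).
  { field_simplify_eq; [nra|lra]. }
  rewrite Hroot; split; [apply Rdiv_lt_0_compat; lra|].
  unfold Rdiv; apply Rmult_le_compat_l; [lra|].
  apply Rinv_le_contravar; lra.
Qed.

End Quadratic.

(** * Positivity of the discriminant *)

Lemma mul_div_add_le_quarter a b : 0 < a -> 0 < b -> a * b / (a + b) <= (a + b) / 4.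
Proof.
  intros Ha Hb; apply (Rmult_le_reg_r (a + b)); [lra|].
  replace (a * b / (a + b) * (a + b)) with (a * b) by (field; lra).
  pose proof (pow2_ge_0 (a - b)); lra.
Qed.

Lemma scaled_Delta_rhs_pos s p x r :
  0 < s <= 1 -> 0 < p <= s / 4 -> 0 < x < 1 -> 0 < r <= 1 ->
  0 < (1 + s) * (1 - 2 * p * r) ^ 2 + 4 * p * s * (1 - r) * (1 + 2 * p * r)
      + 4 * x * p ^ 2 * (1 - 2 * p * r) * r ^ 2 / (1 - x) - 8 * p ^ 2 * s * r ^ 2.
Proof.
  intros Hs Hp Hx Hr.
  assert (Hpr : 0 < p * r <= s / 4) by (split; nra).
  assert (H1 : 0 <= (1 + s) * (1 - 2 * p * r) ^ 2 - 8 * p ^ 2 * s * r ^ 2).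
  { replace ((1 + s) * (1 - 2 * p * r) ^ 2 - 8 * p ^ 2 * s * r ^ 2)
      with ((s / 4 - p * r) * (4 * (1 + s) - 4 * (1 - s) * (p * r + s / 4))
            + (1 - s) * (1 + s + s ^ 2 / 4)) by field.
    assert (0 <= (1 - s) * (p * r + s / 4)) by nra.
    assert (0 <= (1 - s) * (1 + s + s ^ 2 / 4)) by nra.
    assert (0 <= (s / 4 - p * r) * (4 * (1 + s) - 4 * (1 - s) * (p * r + s / 4)))
      by (apply Rmult_le_pos; nra).
    lra. }
  assert (H2 : 0 <= 4 * p * s * (1 - r) * (1 + 2 * p * r))
    by (apply Rmult_le_pos; [apply Rmult_le_pos|]; nra).
  assert (H3 : 0 < 4 * x * p ^ 2 * (1 - 2 * p * r) * r ^ 2 / (1 - x)).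
  { apply Rdiv_lt_0_compat; [|lra].
    assert (0 < 1 - 2 * p * r) by nra.
    assert (0 < p ^ 2) by nra; assert (0 < r ^ 2) by nra.
    repeat apply Rmult_lt_0_compat; lra. }
  lra.
Qed.

Definition hyp_ratio (a b x : R) : R := hyp2F1 a b (a + b + 1) x / hyp2F1 a b (a + b) x.

(* Equal to [x * Delta_ab a b x / 2F1(a,b;a+b;x)^2] on (0,1) (see [Delta_ab_scaled]);
   eliminating [2F1(a+1,b+1;a+b+2;x)] by a contiguous relation makes it vanish at [0]. *)
Definition scaled_Delta (a b x : R) : R :=
  x * (1 - 2 * (a * b / (a + b)) * hyp_ratio a b x) ^ 2
  - 8 * a * b * (1 - x) * (1 - hyp_ratio a b x).

Section Discriminant.

Variables a b : R.
Hypotheses (Ha : 0 < a) (Hb : 0 < b) (Hab : a + b <= 1).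

Lemma Derive_hyp2F1_ab x : 0 <= x < 1 ->
  Derive (fun y => hyp2F1 a b (a + b) y) x
  = a * b / (a + b) * hyp2F1 a b (a + b + 1) x / (1 - x).
Proof.
  intro Hx; pose proof (Rabs_lt_1_of_01 x Hx).
  rewrite Derive_hyp2F1, <- hyp2F1_euler_transform by (auto; lra).
  field; lra.
Qed.

Lemma Derive_hyp2F1_ab1 x : 0 <= x < 1 ->
  Derive (fun y => hyp2F1 a b (a + b + 1) y) x
  = a * b / (a + b + 1) * hyp2F1 (a + 1) (b + 1) (a + b + 2) x.
Proof.
  intro Hx; pose proof (Rabs_lt_1_of_01 x Hx).
  rewrite Derive_hyp2F1 by (auto; lra).
  do 2 f_equal; ring.
Qed.

Lemma hyp2F1_ab2_contiguous x : 0 < x < 1 ->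
  hyp2F1 (a + 1) (b + 1) (a + b + 2) x
  = (a + b) * (a + b + 1) * (hyp2F1 a b (a + b) x - hyp2F1 a b (a + b + 1) x) / (a * b * x).
Proof.
  intro Hx.
  replace ((a + b) * (a + b + 1) * (hyp2F1 a b (a + b) x - hyp2F1 a b (a + b + 1) x))
    with ((a + b + 1) * ((a + b) * (hyp2F1 a b (a + b) x - hyp2F1 a b (a + b + 1) x)))
    by ring.
  rewrite <- hyp2F1_contiguous by (auto; try lra; apply Rabs_lt_1_of_01; lra).
  field; repeat split; lra.
Qed.

Lemma hyp_ratio_bounds x : 0 <= x < 1 -> 0 < hyp_ratio a b x <= 1.
Proof.
  intro Hx; unfold hyp_ratio.
  pose proof (hyp2F1_ge_1 a b (a + b) Ha Hb ltac:(lra) x Hx).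
  pose proof (hyp2F1_ge_1 a b (a + b + 1) Ha Hb ltac:(lra) x Hx).
  pose proof (hyp2F1_succ_le a b (a + b) Ha Hb ltac:(lra) x Hx).
  split; [apply Rdiv_lt_0_compat; lra|].
  apply (Rmult_le_reg_r (hyp2F1 a b (a + b) x)); [lra|].
  unfold Rdiv; rewrite Rmult_assoc, Rinv_l; lra.
Qed.

Lemma Delta_ab_scaled x : 0 < x < 1 ->
  Delta_ab a b x = hyp2F1 a b (a + b) x ^ 2 * scaled_Delta a b x / x.
Proof.
  intro Hx.
  pose proof (hyp2F1_ge_1 a b (a + b) Ha Hb ltac:(lra) x ltac:(lra)).
  unfold Delta_ab, g_ab, h_ab, scaled_Delta, hyp_ratio; rewrite hyp2F1_ab2_contiguous by exact Hx.
  field; repeat split; lra.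
Qed.

Lemma scaled_Delta_0 : scaled_Delta a b 0 = 0.
Proof. unfold scaled_Delta, hyp_ratio; rewrite !hyp2F1_0; field; lra. Qed.

Lemma continuity_pt_scaled_Delta x : 0 <= x < 1 -> continuity_pt (scaled_Delta a b) x.
Proof.
  intro Hx; pose proof (hyp2F1_ge_1 a b (a + b) Ha Hb ltac:(lra) x Hx).
  apply continuity_pt_of_ex_derive; unfold scaled_Delta, hyp_ratio.
  auto_derive; repeat split; try (apply ex_derive_hyp2F1_01; auto; lra); lra.
Qed.

Lemma scaled_Delta_euler_op_pos x : 0 < x < 1 ->
  exists l, is_derive (scaled_Delta a b) x l /\
            0 < x * l + (a + b) * scaled_Delta a b x.
Proof.
  intro Hx.
  pose proof (hyp2F1_ge_1 a b (a + b) Ha Hb ltac:(lra) x ltac:(lra)).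
  pose proof (hyp2F1_ge_1 a b (a + b + 1) Ha Hb ltac:(lra) x ltac:(lra)).
  pose proof (hyp_ratio_bounds x ltac:(lra)).
  pose proof (mul_div_add_le_quarter a b Ha Hb).
  pose proof (scaled_Delta_rhs_pos (a + b) (a * b / (a + b)) x (hyp_ratio a b x)
                ltac:(lra) ltac:(split; [apply Rdiv_lt_0_compat|]; nra) Hx ltac:(lra)).
  eexists; split.
  - unfold scaled_Delta, hyp_ratio.
    auto_derive; [repeat split; try (apply ex_derive_hyp2F1_01; auto; lra); lra|reflexivity].
  - rewrite Derive_hyp2F1_ab, Derive_hyp2F1_ab1, hyp2F1_ab2_contiguous by lra.
    match goal with |- 0 < ?e => replace e with (x *
      ((1 + (a + b)) * (1 - 2 * (a * b / (a + b)) * hyp_ratio a b x) ^ 2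
       + 4 * (a * b / (a + b)) * (a + b) * (1 - hyp_ratio a b x)
           * (1 + 2 * (a * b / (a + b)) * hyp_ratio a b x)
       + 4 * x * (a * b / (a + b)) ^ 2 * (1 - 2 * (a * b / (a + b)) * hyp_ratio a b x)
           * hyp_ratio a b x ^ 2 / (1 - x)
       - 8 * (a * b / (a + b)) ^ 2 * (a + b) * hyp_ratio a b x ^ 2)) end.
    + apply Rmult_lt_0_compat; lra.
    + unfold scaled_Delta, hyp_ratio; field; repeat split; lra.
Qed.

Lemma scaled_Delta_pos x : 0 < x < 1 -> 0 < scaled_Delta a b x.
Proof.
  intro Hx; apply pos_of_euler_op_pos with (a + b); try lra.
  - exact scaled_Delta_0.
  - intros y Hy; apply continuity_pt_scaled_Delta; lra.
  - intros y Hy; apply scaled_Delta_euler_op_pos; lra.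
Qed.

Lemma Delta_ab_pos x : 0 < x < 1 -> 0 < Delta_ab a b x.
Proof.
  intro Hx; rewrite Delta_ab_scaled by exact Hx.
  pose proof (hyp2F1_ge_1 a b (a + b) Ha Hb ltac:(lra) x ltac:(lra)).
  pose proof (scaled_Delta_pos x Hx).
  apply Rdiv_lt_0_compat; [apply Rmult_lt_0_compat|]; nra.
Qed.

Lemma Delta_ab_0_nonneg : 0 <= Delta_ab a b 0.
Proof.
  unfold Delta_ab, g_ab, h_ab; rewrite !hyp2F1_0.
  pose proof (mul_div_add_le_quarter a b Ha Hb).
  assert (0 < a * b / (a + b)) by (apply Rdiv_lt_0_compat; nra).
  replace ((- (2 * a * b / (a + b) * 1 + 1)) ^ 2
           - 8 * ((a * b) ^ 2 / ((a + b) * (a + b + 1)) * (1 - 0) * 1 + a * b / (a + b) * 1) * 1)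
    with (1 - 4 * (a * b / (a + b))
          + 4 * (a * b / (a + b)) ^ 2 * (1 - (a + b)) / (1 + (a + b)))
    by (field; lra).
  assert (0 <= 4 * (a * b / (a + b)) ^ 2 * (1 - (a + b)) / (1 + (a + b)))
    by (apply Rdiv_le_0_compat; [apply Rmult_le_pos|]; nra).
  lra.
Qed.

Lemma Delta_ab_nonneg x : 0 <= x < 1 -> 0 <= Delta_ab a b x.
Proof.
  intro Hx; destruct (Req_dec x 0) as [->|Hx0].
  - exact Delta_ab_0_nonneg.
  - apply Rlt_le, Delta_ab_pos; lra.
Qed.

End Discriminant.

(** * The second derivative of [f_abc] *)

Lemma Rdiv_nonneg_iff q d : 0 < d -> 0 <= q / d <-> 0 <= q.
Proof.
  intro Hd; split; intro Hq; [|now apply Rdiv_le_0_compat].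
  replace q with (q / d * d) by (field; lra); apply Rmult_le_pos; lra.
Qed.

Lemma Rdiv_nonpos_iff q d : 0 < d -> q / d <= 0 <-> q <= 0.
Proof.
  intro Hd; pose proof (Rdiv_nonneg_iff (- q) d Hd).
  replace (- q / d) with (- (q / d)) in * by (field; lra); lra.
Qed.

Definition log_denom (c x : R) : R := c - ln (1 - x).

Definition Q_abc (a b c x : R) : R :=
  h_ab a b x * log_denom c x ^ 2 + g_ab a b x * log_denom c x + 2 * hyp2F1 a b (a + b) x.

Definition phi_vertex (a b x : R) : R := ln (1 - x) - g_ab a b x / (2 * h_ab a b x).

Definition df_abc (a b c x : R) : R :=
  (a * b / (a + b) * hyp2F1 a b (a + b + 1) x * log_denom c x - hyp2F1 a b (a + b) x)
  / ((1 - x) * log_denom c x ^ 2).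

Definition d2f_abc (a b c x : R) : R := Q_abc a b c x / (log_denom c x ^ 3 * (1 - x) ^ 2).

Lemma ln_1m_nonpos x : 0 <= x < 1 -> ln (1 - x) <= 0.
Proof. intro Hx; rewrite <- ln_1; apply ln_le; lra. Qed.

Lemma log_denom_ge c x : 0 <= x < 1 -> c <= log_denom c x.
Proof. intro Hx; pose proof (ln_1m_nonpos x Hx); unfold log_denom; lra. Qed.

Lemma exists_ln_1m_lt x0 M : 0 <= x0 < 1 -> exists x1, x0 <= x1 < 1 /\ ln (1 - x1) < M.
Proof.
  intro Hx0; exists (1 - Rmin (1 - x0) (exp (M - 1))).
  pose proof (exp_pos (M - 1)); pose proof (Rmin_l (1 - x0) (exp (M - 1))).
  pose proof (Rmin_r (1 - x0) (exp (M - 1))).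
  pose proof (Rmin_pos (1 - x0) (exp (M - 1)) ltac:(lra) ltac:(lra)).
  split; [lra|].
  replace (1 - (1 - Rmin (1 - x0) (exp (M - 1)))) with (Rmin (1 - x0) (exp (M - 1))) by ring.
  apply Rle_lt_trans with (ln (exp (M - 1))); [apply ln_le; lra|rewrite ln_exp; lra].
Qed.

Section Roots.

Variables a b : R.
Hypotheses (Ha : 0 < a) (Hb : 0 < b) (Hab : a + b <= 1).

Lemma h_ab_pos x : 0 <= x < 1 -> 0 < h_ab a b x.
Proof.
  intro Hx; unfold h_ab.
  pose proof (hyp2F1_ge_1 a b (a + b + 1) Ha Hb ltac:(lra) x Hx).
  pose proof (hyp2F1_ge_1 (a + 1) (b + 1) (a + b + 2) ltac:(lra) ltac:(lra) ltac:(lra) x Hx).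
  assert (0 < a * b / (a + b)) by (apply Rdiv_lt_0_compat; nra).
  assert (0 <= (a * b) ^ 2 / ((a + b) * (a + b + 1)))
    by (apply Rdiv_le_0_compat; [|apply Rmult_lt_0_compat]; nra).
  assert (0 <= (a * b) ^ 2 / ((a + b) * (a + b + 1)) * (1 - x)) by nra.
  nra.
Qed.

Lemma hyp2F1_ab_le_neg_g_ab x : 0 <= x < 1 -> hyp2F1 a b (a + b) x <= - g_ab a b x.
Proof.
  intro Hx; unfold g_ab.
  pose proof (hyp2F1_ge_1 a b (a + b + 1) Ha Hb ltac:(lra) x Hx).
  assert (0 < 2 * a * b / (a + b)) by (apply Rdiv_lt_0_compat; nra).
  nra.
Qed.

Lemma Delta_ab_eq x :
  Delta_ab a b x = g_ab a b x ^ 2 - 4 * h_ab a b x * (2 * hyp2F1 a b (a + b) x).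
Proof. unfold Delta_ab; ring. Qed.

Lemma Q_abc_nonpos_iff c x : 0 <= x < 1 ->
  Q_abc a b c x <= 0 <-> phi_minus a b x <= c <= phi_plus a b x.
Proof.
  intro Hx; unfold Q_abc, phi_minus, phi_plus, omega_minus, omega_plus.
  rewrite quadratic_nonpos_iff;
    [|apply h_ab_pos, Hx|apply Delta_ab_eq|apply Delta_ab_nonneg; auto].
  unfold log_denom; lra.
Qed.

Lemma Q_abc_nonneg_iff c x : 0 <= x < 1 ->
  0 <= Q_abc a b c x <-> c <= phi_minus a b x \/ phi_plus a b x <= c.
Proof.
  intro Hx; unfold Q_abc, phi_minus, phi_plus, omega_minus, omega_plus.
  rewrite quadratic_nonneg_iff;
    [|apply h_ab_pos, Hx|apply Delta_ab_eq|apply Delta_ab_nonneg; auto].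
  unfold log_denom; lra.
Qed.

Lemma phi_vertex_between x : 0 <= x < 1 ->
  phi_minus a b x <= phi_vertex a b x <= phi_plus a b x.
Proof.
  intro Hx; unfold phi_minus, phi_plus, phi_vertex, omega_minus, omega_plus.
  pose proof (quadratic_roots_around_vertex (h_ab a b x) (g_ab a b x) (Delta_ab a b x)
                (h_ab_pos x Hx)).
  unfold Rdiv in *; lra.
Qed.

Lemma Q_abc_at_vertex x : 0 <= x < 1 ->
  Q_abc a b (phi_vertex a b x) x = - Delta_ab a b x / (4 * h_ab a b x).
Proof.
  intro Hx; unfold Q_abc, log_denom, phi_vertex.
  replace (ln (1 - x) - g_ab a b x / (2 * h_ab a b x) - ln (1 - x))
    with (- g_ab a b x / (2 * h_ab a b x)) by (unfold Rdiv; ring).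
  apply quadratic_at_vertex; [apply h_ab_pos, Hx|apply Delta_ab_eq].
Qed.

(* The bound [4] makes [phi_minus] tend to [-oo] at [1], like [ln (1 - x)]. *)
Lemma omega_minus_bounds x : 0 <= x < 1 -> 0 < omega_minus a b x <= 4.
Proof.
  intro Hx; pose proof (hyp2F1_ge_1 a b (a + b) Ha Hb ltac:(lra) x Hx).
  pose proof (hyp2F1_ab_le_neg_g_ab x Hx).
  destruct (quadratic_root_minus_bounds (h_ab a b x) (g_ab a b x) (2 * hyp2F1 a b (a + b) x)
              (Delta_ab a b x) (h_ab_pos x Hx) (Delta_ab_eq x) (Delta_ab_nonneg a b Ha Hb Hab x Hx)
              ltac:(lra) ltac:(lra)) as [Hpos Hle].
  split; [exact Hpos|].
  apply (Rle_trans _ _ _ Hle).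
  apply (Rmult_le_reg_r (- g_ab a b x)); [lra|].
  unfold Rdiv; rewrite Rmult_assoc, Rinv_l; lra.
Qed.

Lemma continuity_pt_phi_vertex x : 0 <= x < 1 -> continuity_pt (phi_vertex a b) x.
Proof.
  intro Hx; pose proof (h_ab_pos x Hx) as Hh.
  apply continuity_pt_of_ex_derive; unfold phi_vertex, g_ab; unfold h_ab in *.
  auto_derive; repeat split; try (apply ex_derive_hyp2F1_01; auto; lra); lra.
Qed.

(* If [c < phi_plus x0], nonnegativity of [Q_abc] puts [c] below [phi_minus x0], while near
   [1] it must lie above [phi_plus]; in between [c] meets the vertex curve, where [Q_abc]
   is [- Delta_ab / (4 h_ab)], forcing [Delta_ab = 0], which only happens at [0]. *)
Lemma phi_plus_le_of_Q_abc_nonneg c :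
  (forall x, 0 <= x < 1 -> 0 <= Q_abc a b c x) -> forall x, 0 <= x < 1 -> phi_plus a b x <= c.
Proof.
  intros HQ x0 Hx0; apply Rnot_lt_le; intro Hlt.
  assert (Hv0 : c <= phi_vertex a b x0).
  { pose proof (phi_vertex_between x0 Hx0).
    destruct (proj1 (Q_abc_nonneg_iff c x0 Hx0) (HQ x0 Hx0)); lra. }
  destruct (exists_ln_1m_lt x0 (c - 4) Hx0) as [x1 [Hx1 Hln]].
  assert (Hv1 : phi_vertex a b x1 <= c).
  { pose proof (omega_minus_bounds x1 ltac:(lra)); pose proof (phi_vertex_between x1 ltac:(lra)).
    destruct (proj1 (Q_abc_nonneg_iff c x1 ltac:(lra)) (HQ x1 ltac:(lra))) as [Hm|Hp];
      [unfold phi_minus in Hm|]; lra. }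
  destruct (IVT_le_decr (phi_vertex a b) x0 x1 c) as [z [Hz Ez]]; try lra.
  { intros z Hz; apply continuity_pt_phi_vertex; lra. }
  pose proof (HQ z ltac:(lra)) as HQz; rewrite <- Ez, Q_abc_at_vertex in HQz by lra.
  pose proof (h_ab_pos z ltac:(lra)).
  assert (HDz : Delta_ab a b z <= 0).
  { apply Rnot_lt_le; intro HDz.
    assert (0 < Delta_ab a b z / (4 * h_ab a b z)) by (apply Rdiv_lt_0_compat; lra).
    unfold Rdiv in *; lra. }
  assert (Hz0 : z = 0).
  { destruct (Req_dec z 0) as [|Hz0]; [assumption|].
    pose proof (Delta_ab_pos a b Ha Hb Hab z ltac:(lra)); lra. }
  subst z; replace x0 with 0 in * by lra.
  assert (HD0 : Delta_ab a b 0 = 0) by (pose proof (Delta_ab_0_nonneg a b Ha Hb Hab); lra).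
  unfold phi_plus, omega_plus in Hlt; rewrite HD0, sqrt_0, Rplus_0_r in Hlt.
  unfold phi_vertex in Ez; unfold Rdiv in *; lra.
Qed.

End Roots.

Section SecondDerivative.

Variables a b c : R.
Hypotheses (Ha : 0 < a) (Hb : 0 < b) (Hc : 0 < c).

(* The shape in which [auto_derive] states its side conditions. *)
Lemma log_denom_ge_unfolded x : 0 <= x < 1 -> c <= c + - ln (1 + - x).
Proof. exact (log_denom_ge c x). Qed.

Lemma is_derive_f_abc x : 0 <= x < 1 -> is_derive (f_abc a b c) x (df_abc a b c x).
Proof.
  intro Hx; pose proof (log_denom_ge_unfolded x Hx).
  unfold f_abc, df_abc, log_denom; auto_derive.
  - repeat split; try (apply ex_derive_hyp2F1_01; auto; lra); lra.
  - rewrite Derive_hyp2F1_ab by auto; unfold Rminus.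
    field; lra.
Qed.

Lemma is_derive_df_abc x : 0 <= x < 1 -> is_derive (df_abc a b c) x (d2f_abc a b c x).
Proof.
  intro Hx; pose proof (log_denom_ge_unfolded x Hx).
  unfold df_abc, d2f_abc, Q_abc, h_ab, g_ab, log_denom; auto_derive.
  - repeat split; try (apply ex_derive_hyp2F1_01; auto; lra); try lra.
    apply Rgt_not_eq; repeat apply Rmult_lt_0_compat; lra.
  - rewrite Derive_hyp2F1_ab, Derive_hyp2F1_ab1 by auto; unfold Rminus.
    field; lra.
Qed.

Lemma continuity_pt_d2f_abc x : 0 <= x < 1 -> continuity_pt (d2f_abc a b c) x.
Proof.
  intro Hx; pose proof (log_denom_ge_unfolded x Hx).
  apply continuity_pt_of_ex_derive.
  unfold d2f_abc, Q_abc, h_ab, g_ab, log_denom; auto_derive.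
  repeat split; try (apply ex_derive_hyp2F1_01; auto; lra); try lra.
  apply Rgt_not_eq; repeat apply Rmult_lt_0_compat; lra.
Qed.

Lemma d2f_abc_denom_pos x : 0 <= x < 1 -> 0 < log_denom c x ^ 3 * (1 - x) ^ 2.
Proof.
  intro Hx; pose proof (log_denom_ge c x Hx).
  apply Rmult_lt_0_compat; apply pow_lt; lra.
Qed.

Lemma convex01_f_abc_iff :
  convex01 (f_abc a b c) <-> forall x, 0 <= x < 1 -> 0 <= Q_abc a b c x.
Proof.
  rewrite (convex01_iff_deriv2_nonneg _ (df_abc a b c) (d2f_abc a b c));
    [|exact is_derive_f_abc|exact is_derive_df_abc|exact continuity_pt_d2f_abc].
  split; intros H x Hx; specialize (H x Hx); unfold d2f_abc in *;
    now rewrite Rdiv_nonneg_iff in * by (apply d2f_abc_denom_pos, Hx).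
Qed.

Lemma concave01_f_abc_iff :
  concave01 (f_abc a b c) <-> forall x, 0 <= x < 1 -> Q_abc a b c x <= 0.
Proof.
  rewrite (concave01_iff_deriv2_nonpos _ (df_abc a b c) (d2f_abc a b c));
    [|exact is_derive_f_abc|exact is_derive_df_abc|exact continuity_pt_d2f_abc].
  split; intros H x Hx; specialize (H x Hx); unfold d2f_abc in *;
    now rewrite Rdiv_nonpos_iff in * by (apply d2f_abc_denom_pos, Hx).
Qed.

End SecondDerivative.

Lemma defined01_iff_pos c : defined01 c <-> 0 < c.
Proof.
  split.
  - intro Hdef; apply Rnot_le_lt; intro Hc.
    assert (He : 0 < exp c <= 1).
    { split; [apply exp_pos|rewrite <- exp_0].
      destruct Hc as [Hc| ->]; [apply Rlt_le, exp_increasing, Hc|lra]. }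
    apply (Hdef (1 - exp c)); [lra|].
    replace (1 - (1 - exp c)) with (exp c) by ring; rewrite ln_exp; ring.
  - intros Hc x Hx; pose proof (ln_1m_nonpos x Hx); lra.
Qed.

Lemma sup01_le_iff (F : R -> R) c :
  Rbar_le (sup01 F) (Finite c) <-> forall x, 0 <= x < 1 -> F x <= c.
Proof.
  unfold sup01; destruct (Lub_Rbar_correct (fun y => exists x, 0 <= x < 1 /\ y = F x))
    as [Hub Hlub].
  split.
  - intros H x Hx; exact (Rbar_le_trans _ _ _ (Hub (F x) (ex_intro _ x (conj Hx eq_refl))) H).
  - intro H; apply Hlub; intros y [x [Hx ->]]; exact (H x Hx).
Qed.

Lemma le_inf01_iff (F : R -> R) c :
  Rbar_le (Finite c) (inf01 F) <-> forall x, 0 <= x < 1 -> c <= F x.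
Proof.
  unfold inf01; destruct (Glb_Rbar_correct (fun y => exists x, 0 <= x < 1 /\ y = F x))
    as [Hlb Hglb].
  split.
  - intros H x Hx; exact (Rbar_le_trans _ _ _ H (Hlb (F x) (ex_intro _ x (conj Hx eq_refl)))).
  - intro H; apply Hglb; intros y [x [Hx ->]]; exact (H x Hx).
Qed.

Lemma phi_minus_0_pos a b : 0 < a -> 0 < b -> a + b <= 1 -> 0 < phi_minus a b 0.
Proof.
  intros Ha Hb Hab; unfold phi_minus; rewrite Rminus_0_r, ln_1, Rplus_0_l.
  apply omega_minus_bounds; auto; lra.
Qed.

Theorem theorem2 (a b c : R) (ha : 0 < a) (hb : 0 < b) (hab : a + b <= 1) :
  ((defined01 c /\ convex01 (f_abc a b c)) <-> Rbar_le (alpha0 a b) (Finite c)) /\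
  ((defined01 c /\ concave01 (f_abc a b c)) <->
     (Rbar_le (delta_minus a b) (Finite c) /\ Rbar_le (Finite c) (delta_plus a b))).
Proof.
  unfold alpha0, delta_minus, delta_plus.
  rewrite defined01_iff_pos, !sup01_le_iff, le_inf01_iff.
  pose proof (phi_minus_0_pos a b ha hb hab) as Hphi0.
  pose proof (phi_vertex_between a b ha hb 0 ltac:(lra)) as Hvertex0.
  split; split.
  - intros [Hc Hconv]; apply phi_plus_le_of_Q_abc_nonneg; auto.
    now apply convex01_f_abc_iff.
  - intro Hphi; assert (Hc : 0 < c) by (specialize (Hphi 0 ltac:(lra)); lra).
    split; [exact Hc|]; apply convex01_f_abc_iff; auto.
    intros x Hx; apply Q_abc_nonneg_iff; auto.
  - intros [Hc Hconc]; rewrite concave01_f_abc_iff in Hconc by auto.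
    split; intros x Hx; apply (Q_abc_nonpos_iff a b ha hb hab c x Hx), Hconc, Hx.
  - intros [Hminus Hplus]; assert (Hc : 0 < c) by (specialize (Hminus 0 ltac:(lra)); lra).
    split; [exact Hc|]; apply concave01_f_abc_iff; auto.
    intros x Hx; apply Q_abc_nonpos_iff; auto.
Qed.
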